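(* There is a polynomial $q$ such that for every $\mathsf{C\text{-}RASP}_+$ program $P$ with $L(P)\neq\emptyset$ there exists a string $w\in L(P)$ with $|w|\le 2^{q(|P|)}$. This exponential bound is optimal in the worst case: there is an infinite family of $\mathsf{C\text{-}RASP}_+$ programs $P_n$ with nonempty languages whose shortest accepted string has length exponential in $|P_n|$.
   Context: $\mathsf{C\text{-}RASP}_+$ formulas over a finite alphabet $\Sigma$: $\phi ::= \sigma \mid \neg\phi \mid \phi_1\wedge\phi_2 \mid \sum_{t\in\mathcal T}\alpha_t t\sim k$, terms $t ::= \#[\phi] \mid c$, with $\sigma\in\Sigma$, $\alpha_t,k,c\in\mathbb{N}$, ${\sim}\in\{\ge,>,=,<,\le\}$. At position $i$ of $w$: $w,i\models\sigma$ iff $w_i=\sigma$; Boolean connectives as usual; $\#[\phi]$ evaluates to $|\{j\in[1,i]: w,j\models\phi\}|$, $c$ to $c$, and comparisons are integer comparisons. $w\models\phi$ iff $w,|w|\models\phi$; $L(\phi)=\{w:w\models\phi\}$. Programs are straight-line (DAG) representations $(\phi_1,\dots,\phi_m)$ with references to earlier lines; the size $|P|$ is the total number of symbols with constants encoded in binary and each reference counted as 1. *)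

From HB Require Import structures.
From mathcomp Require Import all_boot all_order all_algebra.
Set Implicit Arguments. Unset Strict Implicit. Unset Printing Implicit Defensive.
Import GRing.Theory.

(* A term inside a counting comparison: #[line j]  or a constant c. *)
Inductive term := TCount of nat | TConst of nat.

Inductive cmp := CGe | CGt | CEq | CLt | CLe.

(* A program line; references (nat) point to earlier lines (0-indexed). *)
Inductive line (S : Type) :=
| LSym of S
| LNot of nat
| LAnd of nat & nat
| LCmp of seq (nat * term) & cmp & nat.      (* sum_t alpha_t t ~ k *)

Arguments LNot {S}. Arguments LAnd {S}. Arguments LCmp {S}.

Definition program (S : Type) := seq (line S).

Definition term_refs (t : term) : seq nat :=
  if t is TCount j then [:: j] else [::].

Definition line_refs S (l : line S) : seq nat :=
  match l with
  | LSym _ => [::]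
  | LNot j => [:: j]
  | LAnd j k => [:: j; k]
  | LCmp ts _ _ => flatten [seq term_refs t.2 | t <- ts]
  end.

Definition wf_program S (P : program S) : bool :=
  all (fun p => all (fun j => j < p.1) (line_refs p.2)) (zip (iota 0 (size P)) P).

Definition bits (n : nat) : nat := (trunc_log 2 n).+1.

Definition term_size (t : term) : nat :=
  match t with TCount _ => 2 | TConst c => bits c end.

Definition line_size S (l : line S) : nat :=
  match l with
  | LSym _ => 1
  | LNot _ => 2
  | LAnd _ _ => 3
  | LCmp ts _ k => sumn [seq bits t.1 + term_size t.2 + 1 | t <- ts] + 1 + bits k
  end.

Definition prog_size S (P : program S) : nat := sumn [seq line_size l | l <- P].

Definition cmp_eval (o : cmp) (x y : nat) : bool :=
  match o with
  | CGe => y <= x | CGt => y < x | CEq => x == y | CLt => x < y | CLe => x <= y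
  end.

Section Sem.
Variable S : eqType.

(* Position i (0-indexed) corresponds
   to position i+1 of the paper; #[phi] at position i counts positions 0..i. *)
Definition eval_line (w : seq S) (prev : seq (seq bool)) (l : line S) : seq bool :=
  let col j := nth [::] prev j in
  let valat j i := nth false (col j) i in
  let cnt j i := count id (take i.+1 (col j)) in
  let tval t i := match t with TCount j => cnt j i | TConst c => c end in
  let pos := iota 0 (size w) in
  match l with
  | LSym s => [seq x == s | x <- w]
  | LNot j => [seq ~~ valat j i | i <- pos]
  | LAnd j k => [seq valat j i && valat k i | i <- pos]
  | LCmp ts o k => [seq cmp_eval o (sumn [seq t.1 * tval t.2 i | t <- ts]) k | i <- pos]
  end.

Definition eval_program (w : seq S) (P : program S) : seq (seq bool) :=
  foldl (fun prev l => rcons prev (eval_line w prev l)) [::] P.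

Definition accepts (P : program S) (w : seq S) : bool :=
  (0 < size w) && nth false (last [::] (eval_program w P)) (size w).-1.

Definition lang (P : program S) : seq S -> Prop := fun w => accepts P w.
End Sem.

From mathcomp Require Import all_boot all_order all_algebra zify.
Import GRing.Theory.
Set Implicit Arguments. Unset Strict Implicit. Unset Printing Implicit Defensive.

(* Coefficients are natural numbers, so every count #[phi] is nondecreasing in
   the position, and once a count reaches a bound K exceeding every threshold
   constant, the comparisons no longer see it change: each comparison depends
   only on the counts truncated at K.  Call a position deletable when every
   line is false there or has already reached count K.  Removing a deletable
   position (other than the last) leaves all truncated counts, hence all truth
   values, at the remaining positions unchanged.  A non-deletable position
   raises the total truncated count, which is at most |P| K, so an accepted
   word longer than |P| K + 1 can be shortened.  With K = 2^|P| this gives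
   accepted words of length at most 2^(2|P|).  Conversely the program
   [sigma; #[line 0] = 2^n] has size n + 7 and accepts exactly the words with
   2^n occurrences of sigma. *)

Definition rem_nth {T : Type} i (s : seq T) := take i s ++ drop i.+1 s.

Section RemNth.
Variable T : Type.
Implicit Types s : seq T.

Lemma rem_nth0 x s : rem_nth 0 (x :: s) = s.
Proof. by rewrite /rem_nth /= drop0. Qed.

Lemma rem_nthS i x s : rem_nth i.+1 (x :: s) = x :: rem_nth i s.
Proof. by []. Qed.

Lemma size_rem_nth i s : i < size s -> size (rem_nth i s) = (size s).-1.
Proof. by move=> lt_is; rewrite size_cat size_take size_drop lt_is; lia. Qed.

Lemma nth_rem_nth x0 i s t : nth x0 (rem_nth i s) t = nth x0 s (bump i t).
Proof.
elim: s i t => [|x s IHs] [|i] [|t]; rewrite ?rem_nth0 ?rem_nthS //=.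
- by rewrite !nth_nil.
- by rewrite bumpS IHs.
Qed.

Lemma map_rem_nth U (f : T -> U) i s : map f (rem_nth i s) = rem_nth i (map f s).
Proof. by rewrite /rem_nth map_cat map_take map_drop. Qed.

Lemma take_rem_nth n i s : n <= i -> take n (rem_nth i s) = take n s.
Proof.
elim: s n i => [|x s IHs] [|n] [|i]; rewrite ?take0 // => le_ni.
by rewrite rem_nthS /= IHs.
Qed.

End RemNth.

Definition prefix_count (c : seq bool) n := count id (take n c).

Lemma prefix_countS c n : prefix_count c n.+1 = prefix_count c n + nth false c n.
Proof.
rewrite /prefix_count; elim: c n => [|b c IHc] [|n] /=; rewrite ?take0 ?addn0 //.
by rewrite IHc addnA.
Qed.

Lemma leq_prefix_count c : {homo prefix_count c : m n / m <= n}.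
Proof.
move=> m n le_mn; rewrite /prefix_count -(take_takel c le_mn).
exact/leq_count_subseq/take_subseq.
Qed.

Lemma prefix_count_rem_nth c i n : i < n ->
  prefix_count (rem_nth i c) n + nth false c i = prefix_count c n.+1.
Proof.
rewrite /prefix_count; elim: c i n => [|b c IHc] [|i] [|n] //.
- by rewrite rem_nth0 /= addnC.
- by rewrite rem_nthS /= -addnA ltnS => /IHc ->.
Qed.

Definition deletable K i (c : seq bool) := ~~ nth false c i || (K <= prefix_count c i).

Lemma deletable_nil K i : deletable K i [::].
Proof. by rewrite /deletable nth_nil. Qed.

Lemma minn_prefix_count_rem_nth K i c t : deletable K i c ->
  minn K (prefix_count (rem_nth i c) t.+1) = minn K (prefix_count c (bump i t).+1).
Proof.
rewrite /bump; case: leqP => [le_it | lt_ti] del_ic; last first.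
  by rewrite add0n /prefix_count take_rem_nth.
rewrite add1n -(@prefix_count_rem_nth c i t.+1) //.
case/orP: del_ic => [/negbTE-> | sat_ci]; first by rewrite addn0.
have sat_rem : K <= prefix_count (rem_nth i c) t.+1.
  rewrite (leq_trans sat_ci) // {1}/prefix_count -(take_rem_nth c (leqnn i)).
  exact: leq_prefix_count (ltnW _).
lia.
Qed.

Section Truncation.
Variable K : nat.

Lemma eq_minn_add x x' y y' : minn K x = minn K x' -> minn K y = minn K y' ->
  minn K (x + y) = minn K (x' + y').
Proof. lia. Qed.

Lemma eq_minn_mull a x x' : minn K x = minn K x' -> minn K (a * x) = minn K (a * x').
Proof.
case: a => [|a] eq_x; first by rewrite !mul0n.
case: (leqP K x) => [le_Kx | lt_xK]; last by have -> : x' = x by lia.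
have le_Kx' : K <= x' by lia.
by rewrite !(minn_idPl _) // (leq_trans _ (leq_pmull _ _)).
Qed.

Lemma eq_minn_sumn T (F G : T -> nat) s : (forall x, minn K (F x) = minn K (G x)) ->
  minn K (sumn (map F s)) = minn K (sumn (map G s)).
Proof. by move=> eq_FG; elim: s => //= x s IHs; apply: eq_minn_add. Qed.

Lemma cmp_eval_minn o x k : k < K -> cmp_eval o (minn K x) k = cmp_eval o x k.
Proof. by move=> lt_kK; case: o => /=; apply/idP/idP; lia. Qed.

End Truncation.

Lemma nth_map_rem_nth T i (ss : seq (seq T)) j :
  nth [::] (map (rem_nth i) ss) j = rem_nth i (nth [::] ss j).
Proof.
case: (ltnP j (size ss)) => [lt_j | le_j]; first by rewrite (nth_map [::]).
by rewrite !nth_default ?size_map.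
Qed.

Lemma deletable_nth K i cols j : all (deletable K i) cols -> deletable K i (nth [::] cols j).
Proof.
move=> /all_nthP del_cols; case: (ltnP j (size cols)) => [/del_cols // | le_j].
by rewrite nth_default ?deletable_nil.
Qed.

Definition threshold_lt S K (l : line S) := if l is LCmp _ _ k then k < K else true.

Section Deletion.
Variables (S : eqType) (K : nat).
Implicit Types (w : seq S) (P : program S).

Lemma size_eval_line w prev l : size (eval_line w prev l) = size w.
Proof. by case: l => /= *; rewrite size_map ?size_iota. Qed.

Lemma eval_program_rcons w P l :
  eval_program w (rcons P l) = rcons (eval_program w P) (eval_line w (eval_program w P) l).
Proof. by rewrite /eval_program foldl_rcons. Qed.

Lemma size_eval_program w P : size (eval_program w P) = size P.
Proof.
elim/last_ind: P => [// | P l IHP].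
by rewrite eval_program_rcons !size_rcons IHP.
Qed.

Lemma eval_line_rem_nth i w prev l :
  i < size w -> all (deletable K i) prev -> threshold_lt K l ->
  eval_line (rem_nth i w) (map (rem_nth i) prev) l = rem_nth i (eval_line w prev l).
Proof.
move=> lt_iw del_prev lt_l.
case: l lt_l => [s | j | j k | ts o k] lt_l; first by rewrite /= map_rem_nth.
all: apply: (@eq_from_nth _ false); first by rewrite size_eval_line !size_rem_nth ?size_eval_line.
all: move=> t; rewrite size_eval_line size_rem_nth // => lt_t.
all: have lt_bump : bump i t < size w by rewrite /bump; case: leqP; lia.
all: rewrite nth_rem_nth /= !(nth_map 0) ?size_iota ?size_rem_nth //.
all: rewrite !nth_iota ?size_rem_nth // !add0n.
- by rewrite nth_map_rem_nth nth_rem_nth.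
- by rewrite !nth_map_rem_nth !nth_rem_nth.
rewrite -(cmp_eval_minn _ _ lt_l) -[RHS](cmp_eval_minn _ _ lt_l); congr cmp_eval.
apply: eq_minn_sumn => -[a [u | c]] //=; apply: eq_minn_mull.
by rewrite nth_map_rem_nth; apply: minn_prefix_count_rem_nth; apply: deletable_nth.
Qed.

Lemma eval_program_rem_nth i w P :
  i < size w -> all (threshold_lt K) P -> all (deletable K i) (eval_program w P) ->
  eval_program (rem_nth i w) P = map (rem_nth i) (eval_program w P).
Proof.
move=> lt_iw; elim/last_ind: P => [// | P l IHP].
rewrite all_rcons !eval_program_rcons all_rcons map_rcons => /andP[lt_l lt_P] /andP[_ del_P].
by rewrite IHP // eval_line_rem_nth.
Qed.

Lemma accepts_rem_nth i w P :
  i < (size w).-1 -> all (threshold_lt K) P -> all (deletable K i) (eval_program w P) ->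
  accepts P w -> accepts P (rem_nth i w).
Proof.
move=> lt_i lt_P del_P /andP[_ acc_w]; have lt_iw : i < size w by lia.
rewrite /accepts size_rem_nth // eval_program_rem_nth // -!nth_last in acc_w *.
rewrite size_map nth_map_rem_nth nth_rem_nth /bump.
have -> : i <= (size w).-2 by lia.
have -> : (1 + (size w).-2) = (size w).-1 by lia.
by rewrite acc_w; lia.
Qed.

End Deletion.

Definition saturation K (cols : seq (seq bool)) i :=
  sumn [seq minn K (prefix_count c i) | c <- cols].

Lemma saturation_le K cols i : saturation K cols i <= size cols * K.
Proof.
rewrite /saturation mulnC; elim: cols => //= c cs IHcs.
by rewrite mulnS leq_add ?geq_minl.
Qed.

Lemma leq_saturationS K cols i : saturation K cols i <= saturation K cols i.+1.
Proof.
rewrite /saturation; elim: cols => //= c cs IHcs.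
by have := prefix_countS c i; lia.
Qed.

Lemma ltn_saturationS K cols i :
  ~~ all (deletable K i) cols -> saturation K cols i < saturation K cols i.+1.
Proof.
rewrite /saturation; elim: cols => //= c cs IHcs; have := prefix_countS c i.
rewrite negb_and /deletable negb_or negbK -ltnNge => c_iS /orP[/andP[c_i lt_cK] | /IHcs].
  by rewrite c_i in c_iS; have := leq_saturationS K cs i; rewrite /saturation; lia.
by have := leq_saturationS K [:: c] i; rewrite /saturation /=; lia.
Qed.

Lemma exists_deletable K cols n :
  size cols * K < n -> exists2 i, i < n & all (deletable K i) cols.
Proof.
move=> lt_n.
have [/hasP[i] | /hasPn none] := boolP (has (fun i => all (deletable K i) cols) (iota 0 n)).
  by rewrite mem_iota; exists i.
have grow i : i <= n -> i <= saturation K cols i.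
  elim: i => // i IHi lt_in; apply: leq_ltn_trans (IHi (ltnW lt_in)) (ltn_saturationS _).
  by apply: none; rewrite mem_iota.
by have := saturation_le K cols n; have := grow n (leqnn n); lia.
Qed.

Lemma short_accepted_word (S : eqType) K (P : program S) w :
  all (threshold_lt K) P -> accepts P w ->
  exists2 w', accepts P w' & size w' <= (size P * K).+1.
Proof.
move=> lt_P; have [n] := ubnP (size w); elim: n w => // n IHn w /ltnSE le_wn acc_w.
have [short | long] := leqP (size w) (size P * K).+1; first by exists w.
have [i lt_i del_i] : exists2 i, i < (size w).-1 & all (deletable K i) (eval_program w P).
  by apply: exists_deletable; rewrite size_eval_program; lia.
apply: (IHn (rem_nth i w)); last exact: accepts_rem_nth lt_i lt_P del_i acc_w.
by rewrite size_rem_nth; lia.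
Qed.

Lemma threshold_lt_line_size S (l : line S) : threshold_lt (2 ^ line_size l) l.
Proof.
case: l => //= ts _ k; apply: leq_trans (trunc_log_ltn k (isT : 1 < 2)) _.
by rewrite leq_exp2l // /bits leq_addl.
Qed.

Lemma threshold_lt_leq S K K' (l : line S) :
  K <= K' -> threshold_lt K l -> threshold_lt K' l.
Proof. by case: l => //= _ _ k le_K /leq_trans; apply. Qed.

Lemma size_le_prog_size S (P : program S) : size P <= prog_size P.
Proof.
elim: P => //= l P IHP; rewrite -add1n [prog_size _]/prog_size /=.
by apply: leq_add IHP; case: l => //= *; lia.
Qed.

Lemma all_threshold_lt_exp S (P : program S) n :
  prog_size P <= n -> all (threshold_lt (2 ^ n)) P.
Proof.
elim: P => //= l P IHP; rewrite {1}/prog_size /= => le_n; apply/andP; split.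
  apply: threshold_lt_leq (threshold_lt_line_size l).
  by rewrite leq_exp2l // (leq_trans (leq_addr _ _) le_n).
exact: IHP (leq_trans (leq_addl _ _) le_n).
Qed.

Lemma exists_accepted_le_exp (S : eqType) (P : program S) w : accepts P w ->
  exists2 w', accepts P w' & size w' <= 2 ^ (prog_size P + prog_size P).
Proof.
move=> /(short_accepted_word (all_threshold_lt_exp (leqnn _)))[w' acc_w' le_w'].
exists w' => //; apply: leq_trans le_w' _; rewrite expnD.
have := size_le_prog_size P; have := ltn_expl (prog_size P) (isT : 1 < 2).
set X := 2 ^ prog_size P; nia.
Qed.

Definition counting_program S (s : S) n : program S :=
  [:: LSym s; LCmp [:: (1, TCount 0)] CEq (2 ^ n)].

Lemma prog_size_counting_program S (s : S) n : prog_size (counting_program s n) = n + 7.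
Proof. by rewrite /prog_size /= /bits trunc_expnK // trunc_log1; lia. Qed.

Lemma accepts_counting_program (S : eqType) (s : S) n w :
  accepts (counting_program s n) w = (count_mem s w == 2 ^ n).
Proof.
rewrite /accepts /eval_program /=; have [/size0nil-> | w_gt0] := posnP (size w).
  by rewrite eq_sym expn_eq0.
rewrite /= (nth_map 0) ?size_iota ?prednK // nth_iota ?prednK //.
by rewrite take_oversize ?size_map // mul1n addn0 count_map.
Qed.

Lemma size_accepted_counting_program (S : eqType) (s : S) n w :
  accepts (counting_program s n) w -> 2 ^ n <= size w.
Proof. by rewrite accepts_counting_program => /eqP <-; apply: count_size. Qed.

Local Open Scope ring_scope.

Theorem proposition4p6 (Sigma : finType) :
  (exists q : {poly nat},
     forall P : program Sigma, wf_program P ->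
       (exists w, lang P w) ->
       exists w, lang P w /\ (size w <= 2 ^ q.[prog_size P])%N)
  /\
  ((0 < #|Sigma|)%N ->
   exists (c : nat) (Pn : nat -> program Sigma), (0 < c)%N /\
     forall n, [/\ wf_program (Pn n),
                   (n <= prog_size (Pn n))%N,
                   (exists w, lang (Pn n) w) &
                   forall w, lang (Pn n) w -> (2 ^ (prog_size (Pn n) %/ c) <= size w)%N]).
Proof.
split.
  exists ('X + 'X) => P _ [w acc_w].
  have [w' acc_w' le_w'] := exists_accepted_le_exp acc_w.
  by exists w'; rewrite hornerD hornerX.
case/card_gt0P => s _; exists 8%N, (counting_program s); split=> // n.
split=> [||| w /size_accepted_counting_program]; rewrite ?prog_size_counting_program //.
- exact: leq_addr.
- by exists (nseq (2 ^ n) s); rewrite /lang accepts_counting_program count_nseq /= eqxx mul1n.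
by apply: leq_trans; rewrite leq_exp2l //; lia.
Qed.
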